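(* Let $G$ be a group, $\mathfrak g=(g_1,g_2,g_3)$ a string of elements of $G$ and $\mathcal E=\{E_1,E_2,E_3\}$ a partition of $G$ such that $Con(\mathfrak g,\mathcal E)=\{C_1,\dots,C_5\}$ with $C_1=(1,2,3,2)$, $C_2=(1,3,1,3)$, $C_3=(2,1,2,2)$, $C_4=(3,3,1,2)$, $C_5=(3,3,2,1)$. Then $Eq(\mathfrak g,\mathcal E)$ has a normal subsystem, $G$ is non-amenable, and $\tau(G)\le 7$.
   Context: A configuration of $(\mathfrak g,\mathcal E)$ is a tuple $C=(c_0,\dots,c_3)\in\{1,2,3\}^4$ such that some $x\in G$ has $x\in E_{c_0}$ and $g_ix\in E_{c_i}$ for $i=1,2,3$; $Con(\mathfrak g,\mathcal E)$ is the set of all configurations. $Eq(\mathfrak g,\mathcal E)$: variables $f_C$, equations $\sum_{C:\,c_j=i}f_C=\sum_{C:\,c_k=i}f_C$ for all $i$ and $0\le j,k\le 3$, each written $aX=bX$ with $a,b\in\{0,1\}^5$ indicator vectors; a subsystem is a finite list (repetitions allowed, sides may be swapped) of such equations $A_tX=B_tX$, written $(B-A)X=0$. Normality: with $\sum_t(B_t-A_t)$ strictly positive, $T$ the lower triangular all-ones matrix, and $P^+$ the permutation matrix $P$ with rows cyclically shifted up by one, the system is normal if for some permutation matrix $P$ all entries of $TP(B-A)-P^+A$ are integers $\ge-1$. Tarski number $\tau(G)$: minimum of $r+s$ over complete paradoxical decompositions, i.e. partitions $\{A_1,\dots,A_r,B_1,\dots,B_s\}$ of $G$ with $a_i,b_j\in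 G$ such that $\{a_iA_i\}$ and $\{b_jB_j\}$ each partition $G$. *)

From Stdlib Require Import Reals.
From HB Require Import structures.
From mathcomp Require Import all_boot all_order all_algebra all_fingroup.
Set Implicit Arguments. Unset Strict Implicit. Unset Printing Implicit Defensive.
Import GRing.Theory Num.Theory.

Record AbsGroup := MkGroup {
  gcarrier :> Type;
  gmul : gcarrier -> gcarrier -> gcarrier;
  gone : gcarrier;
  ginv : gcarrier -> gcarrier;
  gmulA : forall x y z, gmul x (gmul y z) = gmul (gmul x y) z;
  gmul1 : forall x, gmul gone x = x;
  gmulV : forall x, gmul (ginv x) x = gone
}.

(* E i is the block E_i (only i = 1,2,3 matter); every x lies in exactly one. *)
Definition is_partition3 (G : AbsGroup) (E : nat -> G -> Prop) : Prop :=
  forall x : G, exists! i : nat, (1 <= i <= 3)%N /\ E i x.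

Definition config := (nat * nat * nat * nat)%type.

Definition comp (C : config) (j : nat) : nat :=
  match j with
  | 0 => C.1.1.1 | 1 => C.1.1.2 | 2 => C.1.2 | _ => C.2 end.

Definition in123 (n : nat) : bool := (1 <= n <= 3)%N.

Definition is_config (G : AbsGroup) (g1 g2 g3 : G) (E : nat -> G -> Prop)
    (C : config) : Prop :=
  [/\ in123 (comp C 0), in123 (comp C 1), in123 (comp C 2) & in123 (comp C 3)] /\
  exists x : G, E (comp C 0) x /\ E (comp C 1) (gmul g1 x) /\
                E (comp C 2) (gmul g2 x) /\ E (comp C 3) (gmul g3 x).

(* With variables indexed by an enumeration cs of Con(g,E), the equation
   sum_{C : c_j = i} f_C = sum_{C : c_k = i} f_C  is  a X = b X  with
   a = eq_vec cs i j, b = eq_vec cs i k. *)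
Definition eq_vec (cs : seq config) (i j : nat) : 'rV[int]_(size cs) :=
  \row_(c < size cs) Posz ((comp (nth (0,0,0,0)%N cs c) j == i) : nat).

(* An equation of Eq(g,E): a triple (i,j,k), i in {1,2,3}, 0 <= j,k <= 3. *)
Definition valid_eq (e : nat * nat * nat) : bool :=
  in123 e.1.1 && (e.1.2 <= 3)%N && (e.2 <= 3)%N.

(* Matrices A (left sides) and B (right sides) of a subsystem given by a
   list of m equations (repetitions allowed; swapping sides = swapping j,k). *)
Definition sysA (cs : seq config) m (es : 'I_m -> nat * nat * nat)
  : 'M[int]_(m, size cs) :=
  \matrix_(t < m, c < size cs) eq_vec cs (es t).1.1 (es t).1.2 ord0 c.
Definition sysB (cs : seq config) m (es : 'I_m -> nat * nat * nat)
  : 'M[int]_(m, size cs) :=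
  \matrix_(t < m, c < size cs) eq_vec cs (es t).1.1 (es t).2 ord0 c.

Definition lowT m : 'M[int]_m := \matrix_(i < m, j < m) Posz ((j <= i)%N : nat).

Definition shift_up m (P : 'M[int]_m) : 'M[int]_m :=
  \matrix_(i < m, j < m) P (ordS i) j.

Definition normal_system m n (A B : 'M[int]_(m, n)) : Prop :=
  (forall c : 'I_n, (0 < \sum_(t < m) (B t c - A t c))%R) /\
  exists s : 'S_m,
    forall (t : 'I_m) (c : 'I_n),
      (-1 <= (lowT m *m perm_mx s *m (B - A) - shift_up (perm_mx s) *m A) t c)%R.

Definition has_normal_subsystem_list (cs : seq config) : Prop :=
  exists (m : nat) (es : 'I_m -> nat * nat * nat),
    (forall t, valid_eq (es t)) /\ normal_system (sysA cs es) (sysB cs es).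

Definition Eq_has_normal_subsystem (G : AbsGroup) (g1 g2 g3 : G)
    (E : nat -> G -> Prop) : Prop :=
  exists cs : seq config, uniq cs /\
    (forall C, is_config g1 g2 g3 E C <-> C \in cs) /\
    has_normal_subsystem_list cs.

Definition translate (G : AbsGroup) (g : G) (A : G -> Prop) : G -> Prop :=
  fun x => A (gmul (ginv g) x).

Definition amenable (G : AbsGroup) : Prop :=
  exists mu : (G -> Prop) -> R,
    (forall A, Rle R0 (mu A)) /\
    mu (fun _ => True) = R1 /\
    (forall A B, (forall x, A x -> B x -> False) ->
       mu (fun x => A x \/ B x) = Rplus (mu A) (mu B)) /\
    (forall g A, mu (translate g A) = mu A).

(* pieces indexed by (false,i) for A_i (i < r) and (true,j) for B_j (j < s) *)
Definition complete_paradoxical (G : AbsGroup) (r s : nat) : Prop :=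
  exists (A B : nat -> G -> Prop) (a b : nat -> G),
    (forall i, (i < r)%N -> exists x, A i x) /\
    (forall j, (j < s)%N -> exists x, B j x) /\
    (forall x : G, exists! p : bool * nat,
        if p.1 then (p.2 < s)%N /\ B p.2 x else (p.2 < r)%N /\ A p.2 x) /\
    (forall y : G, exists! i, (i < r)%N /\ translate (a i) (A i) y) /\
    (forall y : G, exists! j, (j < s)%N /\ translate (b j) (B j) y).

(* tau(G) <= n : the minimum of r+s over complete paradoxical decompositions
   (infinite if there are none) is at most n *)
Definition tarski_le (G : AbsGroup) (n : nat) : Prop :=
  exists r s, (r + s <= n)%N /\ complete_paradoxical G r s.

(* Write X_C for the set of points x whose configuration (E-blocks of x, g1 x, g2 x, g3 x) is C,
   and m_C for its mass under an invariant mean.  Since g_j maps {x | c_j(x) = i} onto E_i, the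
   masses solve Eq(g, E); for the five configurations C_1..C_5 of the theorem the equations
   m_3 + m_5 = m_3, m_5 = m_1 + m_2, m_1 = m_3 and m_1 + m_3 + m_4 = m_3 force all masses to
   vanish, contradicting total mass 1.
   The same translations give a paradoxical decomposition with 4 + 3 pieces: g1 X_1 = X_3,
   g3 X_5 = X_1 u X_2, and g2, g3 map X_3 u X_5 resp. X_1 u X_3 u X_4 into X_3, whence
     G = (X_1 u X_2 u X_4) u g3 g2 X_5 u g3 g2 g2 X_3            (translated back: X_1 u X_2 u X_4, X_5, X_3)
       u g3 (X_1 u X_4) u g3 g2 g2 X_5 u g3^-1 X_2 u g3^-1 X_1     (translated back: X_1 u X_4, X_5, X_2, X_3)
   is a disjoint union.  Whether x lies in a given piece depends only on the configurations of
   x, g3 x, g1 g3 x, g3^-1 x, g2^-1 g3^-1 x and g2^-1 g2^-1 g3^-1 x, and adjacent points share an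
   E-block, so disjointness and covering reduce to a finite check. *)

From Pilot Require Import Defs.
From Stdlib Require Import Reals Lra FunctionalExtensionality PropExtensionality.
From Stdlib Require Import ClassicalEpsilon.
From HB Require Import structures.
From mathcomp Require Import all_boot all_order all_algebra all_fingroup.
(* Re-imported so that [comp] is [Defs.comp] rather than ssrfun's composition. *)
Import Defs.
Set Implicit Arguments. Unset Strict Implicit. Unset Printing Implicit Defensive.

Section GroupLaws.
Variable G : AbsGroup.

Lemma gmulrV (x : G) : gmul x (ginv x) = gone G.
Proof.
have -> : gmul x (ginv x) =
    gmul (gmul (ginv (gmul x (ginv x))) (gmul x (ginv x))) (gmul x (ginv x)).
  by rewrite gmulV gmul1.
by rewrite -!gmulA (gmulA (ginv x) x) gmulV gmul1 gmulV.
Qed.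

Lemma gmulKV (g x : G) : gmul g (gmul (ginv g) x) = x.
Proof. by rewrite gmulA gmulrV gmul1. Qed.

End GroupLaws.

Lemma partition3_index (G : AbsGroup) (E : nat -> G -> Prop) :
  is_partition3 E ->
  exists d : G -> nat, forall x i, (1 <= i <= 3)%N /\ E i x <-> d x = i.
Proof.
move=> hE; exists (fun x => proj1_sig (constructive_indefinite_description _ (hE x))).
move=> x i; case: (constructive_indefinite_description _ _) => /= j [Pj Puniq].
by split=> [/Puniq | <-].
Qed.

Definition con8 : seq config :=
  [:: (1,2,3,2); (1,3,1,3); (2,1,2,2); (3,3,1,2); (3,3,2,1)]%N.

Section ConfigurationOfAPoint.
Variables (G : AbsGroup) (g1 g2 g3 : G) (d : G -> nat).

Definition gen (j : nat) : G :=
  match j with 1 => g1 | 2 => g2 | 3 => g3 | _ => gone G end.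

Definition config_of (x : G) : config :=
  (d x, d (gmul g1 x), d (gmul g2 x), d (gmul g3 x)).

Lemma comp_config_of j x : (j <= 3)%N -> comp (config_of x) j = d (gmul (gen j) x).
Proof. by case: j => [|[|[|[|]]]] //= _; rewrite gmul1. Qed.

Definition linked j (c c' : config) : bool := comp c j == comp c' 0.

Lemma linked_config j x : (j <= 3)%N -> linked j (config_of x) (config_of (gmul (gen j) x)).
Proof. by move=> j3; rewrite /linked comp_config_of. Qed.

Lemma linked_config_inv j x :
  (j <= 3)%N -> linked j (config_of (gmul (ginv (gen j)) x)) (config_of x).
Proof. by move=> j3; rewrite /linked comp_config_of // gmulKV. Qed.

End ConfigurationOfAPoint.

Lemma is_config_of (G : AbsGroup) (g1 g2 g3 : G) (E : nat -> G -> Prop) (d : G -> nat) :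
  (forall x i, (1 <= i <= 3)%N /\ E i x <-> d x = i) ->
  forall C, is_config g1 g2 g3 E C <-> exists x, config_of g1 g2 g3 d x = C.
Proof.
move=> dE C; have dP y : (1 <= d y <= 3)%N /\ E (d y) y by apply/dE.
split=> [|[x <-]].
  case: C => [[[c0 c1] c2] c3] [[b0 b1 b2 b3] [x [e0 [e1 [e2 e3]]]]]; exists x.
  by rewrite /config_of (proj1 (dE _ _) (conj b0 e0)) (proj1 (dE _ _) (conj b1 e1))
    (proj1 (dE _ _) (conj b2 e2)) (proj1 (dE _ _) (conj b3 e3)).
split; first by split; apply: (dP _).1.
by exists x; split; [|split; [|split]]; apply: (dP _).2.
Qed.

Fixpoint sumR (s : seq R) : R := if s is r :: s' then Rplus r (sumR s') else R0.

Section InvariantMean.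
Variables (G : AbsGroup) (g1 g2 g3 : G) (d : G -> nat) (mu : (G -> Prop) -> R).
Hypotheses (mu_setT : mu (fun _ => True) = R1)
  (muU : forall A B, (forall x, A x -> B x -> False) ->
          mu (fun x => A x \/ B x) = Rplus (mu A) (mu B))
  (mu_translate : forall g A, mu (translate g A) = mu A).

Let cf := config_of g1 g2 g3 d.

Lemma eq_mu (A B : G -> Prop) : (forall x, A x <-> B x) -> mu A = mu B.
Proof.
move=> AB; congr mu; apply: functional_extensionality => x.
exact: propositional_extensionality.
Qed.

Lemma mu_set0 : mu (fun _ => False) = R0.
Proof.
have := muU (A := fun _ => False) (B := fun _ => False) (fun _ F _ => F).
rewrite (@eq_mu (fun x => False \/ False) (fun _ => False)); last by move=> x; tauto.
lra.
Qed.

Definition config_mass (C : config) : R := mu (fun x => cf x == C).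

Lemma mu_config_seq (s : seq config) (p : pred config) : uniq s ->
  mu (fun x => (cf x \in s) && p (cf x)) = sumR [seq config_mass C | C <- s & p C].
Proof.
elim: s => [_ | C s IHs /= /andP[Cs /IHs IH]].
  by rewrite /= -mu_set0; apply: eq_mu.
case: ifP => pC /=; rewrite -IH.
  rewrite -muU; last by move=> x /eqP-> /andP[/(negP Cs)].
  apply: eq_mu => x; rewrite inE; split.
    by case/andP=> /orP[->|->] ->; [left | right].
  by case=> [/[dup] /eqP-> -> | /andP[-> ->]]; rewrite ?orbT.
apply: eq_mu => x; rewrite inE; case: eqP => [-> | _] //=.
by rewrite pC andbF.
Qed.

Lemma mu_config_pred (s : seq config) (p : pred config) :
  uniq s -> (forall x, cf x \in s) ->
  mu (fun x => p (cf x)) = sumR [seq config_mass C | C <- s & p C].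
Proof.
by move=> s_uniq s_cover; rewrite -mu_config_seq //; apply: eq_mu => x; rewrite s_cover.
Qed.

Lemma config_mass_total (s : seq config) :
  uniq s -> (forall x, cf x \in s) -> sumR [seq config_mass C | C <- s] = R1.
Proof.
move=> s_uniq s_cover; rewrite -mu_setT -(filter_predT s).
by rewrite -(mu_config_pred predT) //; apply: eq_mu.
Qed.

Lemma config_mass_solves_Eq (s : seq config) i j :
  uniq s -> (forall x, cf x \in s) -> (j <= 3)%N ->
  sumR [seq config_mass C | C <- s & comp C j == i] =
  sumR [seq config_mass C | C <- s & comp C 0 == i].
Proof.
move=> s_uniq s_cover j3.
rewrite -!(mu_config_pred (fun C => comp C _ == i)) //.
rewrite -(mu_translate (gen g1 g2 g3 j)).
by apply: eq_mu => x; rewrite /translate comp_config_of // gmulKV.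
Qed.

End InvariantMean.

Lemma con8_not_amenable (G : AbsGroup) (g1 g2 g3 : G) (d : G -> nat) :
  (forall x, config_of g1 g2 g3 d x \in con8) -> ~ amenable G.
Proof.
move=> cover [mu [mu_ge0 [mu_setT [muU mu_tr]]]].
have con8_uniq : uniq con8 by [].
have Eq i j := @config_mass_solves_Eq _ g1 g2 g3 d mu muU mu_tr con8 i j con8_uniq cover.
have mass_ge0 C : Rle R0 (config_mass g1 g2 g3 d mu C) by exact: mu_ge0.
move: (Eq 2 2 isT) (Eq 1 3 isT) (Eq 2 1 isT) (Eq 2 3 isT).
move: (config_mass_total mu_setT muU con8_uniq cover) => /=.
move: (mass_ge0 (1,2,3,2)%N) (mass_ge0 (1,3,1,3)%N) (mass_ge0 (3,3,1,2)%N).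
lra.
Qed.

Lemma exists_unique_count1 (T : eqType) (P : T -> Prop) (s : seq T) (pb : pred T) :
  count pb s = 1%N -> (forall p, P p <-> (p \in s) && pb p) -> exists! p, P p.
Proof.
rewrite -size_filter => s1 Ps.
have [p s_pb] : exists p, filter pb s = [:: p].
  by case: (filter pb s) s1 => [|p []] // _; exists p.
have p_in : p \in filter pb s by rewrite s_pb mem_head.
exists p; split; first by apply/Ps; rewrite andbC -mem_filter.
by move=> q /Ps; rewrite andbC -mem_filter s_pb inE => /eqP.
Qed.

Definition targetA (i : nat) : pred config := fun C =>
  match i with
  | 0 => C \in [:: (1,2,3,2); (3,3,1,2)]%N
  | 1 => C == (3,3,2,1)%N
  | 2 => C == (1,3,1,3)%N
  | 3 => C == (2,1,2,2)%N
  | _ => false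
  end.

Definition targetB (j : nat) : pred config := fun C =>
  match j with
  | 0 => C \in [:: (1,2,3,2); (1,3,1,3); (3,3,1,2)]%N
  | 1 => C == (2,1,2,2)%N
  | 2 => C == (3,3,2,1)%N
  | _ => false
  end.

Definition pieces : seq (bool * nat) :=
  [:: (false, 0); (false, 1); (false, 2); (false, 3); (true, 0); (true, 1); (true, 2)]%N.

(* The arguments are the configurations of x, g3 x, g1 g3 x, g3^-1 x, g2^-1 g3^-1 x and
   g2^-1 g2^-1 g3^-1 x. *)
Definition piece_at (p : bool * nat) (cx cz czz cw cu cv : config) : bool :=
  match p with
  | (false, 0) => targetA 0 cw
  | (false, 1) => targetA 1 cv
  | (false, 2) => targetA 2 cz
  | (false, 3) => targetA 3 czz
  | (true, 0) => targetB 0 cx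
  | (true, 1) => targetB 1 cv
  | (true, 2) => targetB 2 cu
  | _ => false
  end%N.

Lemma con8_targetsA_partition : all (fun C => count (targetA^~ C) (iota 0 4) == 1%N) con8.
Proof. by []. Qed.

Lemma con8_targetsB_partition : all (fun C => count (targetB^~ C) (iota 0 3) == 1%N) con8.
Proof. by []. Qed.

Lemma con8_pieces_partition :
  all (fun cx => all (fun cz => linked 3 cx cz ==>
  all (fun czz => linked 1 cz czz ==>
  all (fun cw => linked 3 cw cx ==>
  all (fun cu => linked 2 cu cw ==>
  all (fun cv => linked 2 cv cu ==>
    (count (fun p => piece_at p cx cz czz cw cu cv) pieces == 1%N))
  con8) con8) con8) con8) con8) con8.
Proof. by vm_compute. Qed.

Section ParadoxicalDecomposition.
Variables (G : AbsGroup) (g1 g2 g3 : G) (d : G -> nat).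
Let cf := config_of g1 g2 g3 d.
Hypotheses (cover : forall x, cf x \in con8)
  (realized : forall C, C \in con8 -> exists x, cf x = C).

Definition piece (a : G) (Q : pred config) : G -> Prop := fun x => Q (cf (gmul a x)).

Lemma translate_piece a Q y : translate a (piece a Q) y = Q (cf y).
Proof. by rewrite /translate /piece gmulKV. Qed.

Lemma piece_nonempty a Q : has Q con8 -> exists x, piece a Q x.
Proof.
case/hasP=> C /realized[y <-] Qy; exists (gmul (ginv a) y).
by rewrite -/(translate a (piece a Q) y) translate_piece.
Qed.

Definition shiftA (i : nat) : G :=
  match i with
  | 0 => ginv g3
  | 1 => gmul (gmul (ginv g2) (ginv g2)) (ginv g3)
  | 2 => g3
  | _ => gmul g1 g3
  end.

Definition shiftB (j : nat) : G :=
  match j with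
  | 0 => gone G
  | 1 => gmul (gmul (ginv g2) (ginv g2)) (ginv g3)
  | _ => gmul (ginv g2) (ginv g3)
  end.

Definition pieceA i := piece (shiftA i) (targetA i).
Definition pieceB j := piece (shiftB j) (targetB j).

Lemma piece_atE x p :
  (if p.1 then (p.2 < 3)%N /\ pieceB p.2 x else (p.2 < 4)%N /\ pieceA p.2 x) <->
  (p \in pieces) && piece_at p (cf x) (cf (gmul g3 x)) (cf (gmul g1 (gmul g3 x)))
    (cf (gmul (ginv g3) x)) (cf (gmul (ginv g2) (gmul (ginv g3) x)))
    (cf (gmul (ginv g2) (gmul (ginv g2) (gmul (ginv g3) x)))).
Proof.
case: p => [[] [|[|[|[|n]]]]]; rewrite /pieceA /pieceB /piece /= ?gmul1 -?gmulA;
  by split=> [[]|].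
Qed.

Lemma pieces_partition x : exists! p : bool * nat,
  if p.1 then (p.2 < 3)%N /\ pieceB p.2 x else (p.2 < 4)%N /\ pieceA p.2 x.
Proof.
apply: exists_unique_count1 (piece_atE x); apply/eqP.
move: con8_pieces_partition => /allP/(_ _ (cover x)).
move=> /allP/(_ _ (cover _))/implyP/(_ (linked_config g1 g2 g3 d (j:=3) x isT)).
move=> /allP/(_ _ (cover _))/implyP/(_ (linked_config g1 g2 g3 d (j:=1) _ isT)).
move=> /allP/(_ _ (cover _))/implyP/(_ (linked_config_inv g1 g2 g3 d (j:=3) x isT)).
move=> /allP/(_ _ (cover _))/implyP/(_ (linked_config_inv g1 g2 g3 d (j:=2) _ isT)).
by move=> /allP/(_ _ (cover _))/implyP/(_ (linked_config_inv g1 g2 g3 d (j:=2) _ isT)).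
Qed.

Lemma translates_partition (shift : nat -> G) (target : nat -> pred config) n :
  all (fun C => count (target^~ C) (iota 0 n) == 1%N) con8 ->
  forall y, exists! i, (i < n)%N /\ translate (shift i) (piece (shift i) (target i)) y.
Proof.
move=> /allP target_part y; apply: exists_unique_count1 (eqP (target_part _ (cover y))) _ => i.
by rewrite translate_piece mem_iota; split=> [[-> ->] | /andP[/andP[_ ->] ->]].
Qed.

Lemma con8_tarski_le7 : tarski_le G 7.
Proof.
exists 4%N, 3%N; split=> //; exists pieceA, pieceB, shiftA, shiftB.
split; first by case=> [|[|[|[|]]]] // _; apply: piece_nonempty.
split; first by case=> [|[|[|]]] // _; apply: piece_nonempty.
split; first exact: pieces_partition.
by split; apply: translates_partition;
  [exact: con8_targetsA_partition | exact: con8_targetsB_partition].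
Qed.

End ParadoxicalDecomposition.

Section NormalSubsystem.
Local Open Scope ring_scope.

Definition con8_subsystem (t : 'I_4) : nat * nat * nat :=
  nth (0, 0, 0)%N [:: (1, 1, 0); (2, 1, 2); (2, 0, 3); (2, 1, 3)]%N t.

Lemma con8_normal_subsystem : has_normal_subsystem_list con8.
Proof.
exists 4%N, con8_subsystem; split; first by case=> [[|[|[|[|]]]]].
split.
  case=> [[|[|[|[|[|]]]]] c5] //;
  by rewrite !big_ord_recl !big_ord0 /sysA /sysB /eq_vec !mxE.
exists 1%g; rewrite perm_mx1 mulmx1 => t c.
case: t => [[|[|[|[|]]]] t4] //; case: c => [[|[|[|[|[|]]]]] c5] //;
by rewrite !mxE !big_ord_recl !big_ord0 /sysA /sysB /eq_vec /lowT /shift_up !mxE.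
Qed.

End NormalSubsystem.

Theorem mainTheorem8 (G : AbsGroup) (g1 g2 g3 : G) (E : nat -> G -> Prop)
  (hE : is_partition3 E)
  (hCon : forall C : config, is_config g1 g2 g3 E C <->
     C \in [:: (1,2,3,2); (1,3,1,3); (2,1,2,2); (3,3,1,2); (3,3,2,1)]%N) :
  Eq_has_normal_subsystem g1 g2 g3 E /\ ~ amenable G /\ tarski_le G 7.
Proof.
split; first by exists con8; split=> //; split; [exact: hCon | exact: con8_normal_subsystem].
have [d /(is_config_of g1 g2 g3) Con_dE] := partition3_index hE.
have cover x : config_of g1 g2 g3 d x \in con8 by apply/hCon/Con_dE; exists x.
have realized C : C \in con8 -> exists x, config_of g1 g2 g3 d x = C.
  by move/hCon/Con_dE.
split; [exact: con8_not_amenable cover | exact: con8_tarski_le7 cover realized].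
Qed.
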